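(* Let $n\ge1$ and let $\mathcal A_n$ be the real Lie algebra with basis $\{Y,X_1,\dots,X_n\}$ and brackets $[Y,X_i]=X_i$, $[X_i,X_j]=0$. For every inner product on $\mathcal A_n$, every geodesic element is orthogonal to the derived algebra $\mathcal A_n'=\operatorname{Span}(X_1,\dots,X_n)$; consequently, up to scaling, there is only one geodesic element.
   Context: For an inner product $\langle\cdot,\cdot\rangle$ on a real Lie algebra $\mathfrak g$, a nonzero $X\in\mathfrak g$ is a geodesic element if $\langle X,[X,Z]\rangle=0$ for all $Z\in\mathfrak g$. *)

From HB Require Import structures.
From mathcomp Require Import all_boot all_order all_algebra.
Set Implicit Arguments. Unset Strict Implicit. Unset Printing Implicit Defensive.
Import Order.TTheory GRing.Theory Num.Theory.
Local Open Scope ring_scope.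

(* The Lie algebra A_n is modelled on R^(n+1) = 'rV[R]_(n.+1), with basis
   Y = e_0 and X_i = e_i (i = 1..n).  Writing u = u_0 Y + u', where u' is the
   part of u in Span(X_1..X_n), the bracket determined by [Y,X_i] = X_i,
   [X_i,X_j] = 0 (and bilinearity/antisymmetry) is
      [u, v] = u_0 v' - v_0 u'. *)

Definition An (R : nzRingType) (n : nat) := 'rV[R]_(n.+1).

Definition ycoord (R : nzRingType) (n : nat) (u : An R n) : R := u 0 0.

Definition xpart (R : nzRingType) (n : nat) (u : An R n) : An R n :=
  \row_(j < n.+1) (if j == 0 then 0 else u 0 j).

Definition An_bracket (R : nzRingType) (n : nat) (u v : An R n) : An R n :=
  ycoord u *: xpart v - ycoord v *: xpart u.

Definition An_Y (R : nzRingType) (n : nat) : An R n := delta_mx 0 0.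
Definition An_X (R : nzRingType) (n : nat) (i : 'I_n) : An R n :=
  delta_mx 0 (lift 0 i).

Definition An_derived (R : nzRingType) (n : nat) (u : An R n) : Prop :=
  ycoord u = 0.

Definition is_inner_product (R : realFieldType) (V : lmodType R)
    (ip : V -> V -> R) : Prop :=
  [/\ (forall a u v w, ip (a *: u + v) w = a * ip u w + ip v w),
      (forall u v, ip u v = ip v u) &
      (forall u, u != 0 -> 0 < ip u u)].

Definition geodesic (R : realFieldType) (V : lmodType R)
    (bracket : V -> V -> V) (ip : V -> V -> R) (x : V) : Prop :=
  x != 0 /\ forall z, ip x (bracket x z) = 0.

From HB Require Import structures.
From mathcomp Require Import all_boot all_order all_algebra.
Import Order.TTheory GRing.Theory Num.Theory.
Local Open Scope ring_scope.
Set Implicit Arguments. Unset Strict Implicit.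

(* For a geodesic x and z in the derived algebra, [x, z] = x_0 z, so
   <x, [x, z]> = x_0 <x, z>; and x_0 <> 0, since otherwise [x, Y] = -x would
   force <x, x> = 0.  Conversely every bracket lies in the derived algebra, so
   the geodesics are exactly the nonzero vectors orthogonal to it: a line, as
   the derived algebra is a hyperplane. *)

Section InnerProduct.
Variables (R : realFieldType) (V : lmodType R) (ip : V -> V -> R).
Hypothesis hip : is_inner_product ip.

Lemma ipDl a u v w : ip (a *: u + v) w = a * ip u w + ip v w.
Proof. by case: hip. Qed.

Lemma ipC u v : ip u v = ip v u.
Proof. by case: hip. Qed.

Lemma ip_gt0 u : u != 0 -> 0 < ip u u.
Proof. by case: hip => _ _; apply. Qed.

Lemma ip0l w : ip 0 w = 0.
Proof.
have := ipDl 1 0 0 w; rewrite scale1r addr0 mul1r => ip00.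
by apply/(addrI (ip 0 w)); rewrite addr0 -ip00.
Qed.

Lemma ipZl a u w : ip (a *: u) w = a * ip u w.
Proof. by rewrite -[a *: u]addr0 ipDl ip0l addr0. Qed.

Lemma ipZr a u w : ip w (a *: u) = a * ip w u.
Proof. by rewrite ipC ipZl ipC. Qed.

Lemma ipDr u v w : ip w (u + v) = ip w u + ip w v.
Proof. by rewrite ipC -{1}[u]scale1r ipDl mul1r !(ipC w). Qed.

Lemma ipBl u v w : ip (u - v) w = ip u w - ip v w.
Proof. by rewrite -scaleN1r addrC ipDl mulN1r addrC. Qed.

Lemma ip_sumr (I : finType) (P : pred I) (F : I -> V) w :
  ip w (\sum_(i | P i) F i) = \sum_(i | P i) ip w (F i).
Proof.
by elim/big_rec2: _ => [|i y1 y2 _ <-]; rewrite ?ipDr // ipC ip0l.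
Qed.

Lemma ip_self_eq0 u : ip u u = 0 -> u = 0.
Proof. by move=> h; apply/eqP/negPn/negP => /ip_gt0; rewrite h ltxx. Qed.

End InnerProduct.

Section OrthogonalComplement.
Variables (R : realFieldType) (m : nat) (ip : 'rV[R]_m -> 'rV[R]_m -> R).
Hypothesis hip : is_inner_product ip.

(* The Gram matrix of the standard basis against k < m vectors has a
   nontrivial left kernel. *)
Lemma exists_orthogonal_nonzero k (vs : 'I_k -> 'rV[R]_m) : (k < m)%N ->
  exists2 u, u != 0 & forall i, ip u (vs i) = 0.
Proof.
move=> lt_km.
pose G : 'M[R]_(m, k) := \matrix_(j, i) ip 'e_j (vs i).
have kerG_neq0 : kermx G != 0.
  by rewrite -mxrank_eq0 mxrank_ker subn_eq0 -ltnNge (leq_ltn_trans (rank_leq_col G)).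
have [j u_neq0] : exists j, row j (kermx G) != 0.
  apply/existsP; apply: contraR kerG_neq0 => /existsPn row0_all.
  by apply/eqP/row_matrixP => j; rewrite row0; apply/eqP/negPn.
exists (row j (kermx G)) => // i.
set u := row j _; have /matrixP/(_ 0 i) := sub_kermxP (row_sub j (kermx G)).
rewrite !mxE -/u => <-; rewrite {1}(row_sum_delta u) ipC // ip_sumr //.
by apply: eq_bigr => l _; rewrite [G _ _]mxE ipZr // ipC.
Qed.

End OrthogonalComplement.

Section An.
Variables (R : realFieldType) (n : nat).
Implicit Types u v x z : An R n.

Lemma ycoordB u v : ycoord (u - v) = ycoord u - ycoord v.
Proof. by rewrite /ycoord !mxE. Qed.

Lemma ycoordZ a u : ycoord (a *: u) = a * ycoord u.
Proof. by rewrite /ycoord !mxE. Qed.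

Lemma An_derived_bracket u v : An_derived (An_bracket u v).
Proof. by rewrite /An_derived /An_bracket /ycoord !mxE !eqxx !mulr0 subrr. Qed.

Lemma xpart_derived z : An_derived z -> xpart z = z.
Proof.
move=> z0; apply/rowP => j; rewrite mxE; case: eqP => // ->.
by symmetry; apply: z0.
Qed.

Lemma An_bracketY x : An_derived x -> An_bracket x (An_Y R n) = - x.
Proof.
move=> x0; rewrite /An_bracket x0 scale0r add0r xpart_derived //.
by rewrite /ycoord /An_Y mxE !eqxx scale1r.
Qed.

Lemma An_bracket_derived x z : An_derived z -> An_bracket x z = ycoord x *: z.
Proof. by move=> z0; rewrite /An_bracket z0 scale0r subr0 xpart_derived. Qed.

Lemma An_derived_span z :
  An_derived z -> z = \sum_(i < n) z 0 (lift 0 i) *: An_X R i.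
Proof.
by move=> z0; rewrite {1}(row_sum_delta z) big_ord_recl [z 0 0]z0 scale0r add0r.
Qed.

End An.

Section Geodesics.
Variables (R : realFieldType) (n : nat) (ip : An R n -> An R n -> R).
Hypothesis hip : is_inner_product ip.

Definition orthogonal_derived (x : An R n) := forall z, An_derived z -> ip x z = 0.

Lemma geodesic_ycoord_neq0 x : geodesic (@An_bracket R n) ip x -> ycoord x != 0.
Proof.
case=> x_neq0 geo_x; apply: contra x_neq0 => /eqP x0.
have := geo_x (An_Y R n); rewrite An_bracketY // -scaleN1r ipZr // mulN1r.
by move/eqP; rewrite oppr_eq0 => /eqP/(ip_self_eq0 hip) ->.
Qed.

Lemma geodesic_orthogonal_derived x :
  geodesic (@An_bracket R n) ip x -> orthogonal_derived x.
Proof.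
move=> geo_x z z0; have /negPf x0_neq0 := geodesic_ycoord_neq0 geo_x.
case: geo_x => _ /(_ z) /eqP; rewrite An_bracket_derived // ipZr //.
by rewrite mulf_eq0 x0_neq0 => /eqP.
Qed.

Lemma orthogonal_derived_geodesic x :
  x != 0 -> orthogonal_derived x -> geodesic (@An_bracket R n) ip x.
Proof. by move=> x_neq0 orth_x; split => // z; apply/orth_x/An_derived_bracket. Qed.

Lemma exists_orthogonal_derived : exists2 x, x != 0 & orthogonal_derived x.
Proof.
have [x x_neq0 orthX] := exists_orthogonal_nonzero hip (@An_X R n) (ltnSn n).
exists x => // z /An_derived_span ->; rewrite ip_sumr //.
by rewrite big1 // => i _; rewrite ipZr // orthX mulr0.
Qed.

(* x - c x0 lies in the derived algebra once the Y-coordinates match, and is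
   orthogonal to it. *)
Lemma orthogonal_derived_collinear x x0 :
  orthogonal_derived x -> orthogonal_derived x0 -> ycoord x0 != 0 ->
  x = (ycoord x / ycoord x0) *: x0.
Proof.
move=> orth_x orth_x0 x00_neq0; set c := _ / _.
have w0 : An_derived (x - c *: x0).
  by rewrite /An_derived ycoordB ycoordZ divfK // subrr.
apply/eqP; rewrite -subr_eq0; apply/eqP/(ip_self_eq0 hip).
by rewrite ipBl // ipZl // orth_x // orth_x0 // mulr0 subrr.
Qed.

End Geodesics.

Theorem lemma5p1 (R : realFieldType) (n : nat) (hn : (0 < n)%N)
    (ip : An R n -> An R n -> R) (hip : is_inner_product ip) :
  (forall x, geodesic (@An_bracket R n) ip x ->
     forall z, An_derived z -> ip x z = 0) /\
  (exists x0, geodesic (@An_bracket R n) ip x0 /\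
     forall x, geodesic (@An_bracket R n) ip x -> exists c : R, x = c *: x0).
Proof.
split=> [x|]; first exact: geodesic_orthogonal_derived.
have [x0 x0_neq0 orth_x0] := exists_orthogonal_derived hip.
have geo_x0 := orthogonal_derived_geodesic x0_neq0 orth_x0.
exists x0; split => // x geo_x; exists (ycoord x / ycoord x0).
have orth_x := geodesic_orthogonal_derived hip geo_x.
exact (orthogonal_derived_collinear hip orth_x orth_x0 (geodesic_ycoord_neq0 hip geo_x0)).
Qed.
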